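(* Let $\delta=x^{\mathbf d}f(\theta)$ be a homogeneous differential operator of degree $\mathbf d$ with $\mathbf d\neq\mathbf 0$, $-\mathbf d\in S$, $\mathbf d=q\mathbf e$ ($q\in\mathbb Z_{\ge1}$, $\mathbf e$ primitive). If $\delta$ fixes a nonzero monomial ideal $I$, then there exists a subset $\mathcal B\subseteq\mathbb N^n$ compatible with $\mathbf d$ such that (1) $\operatorname{val}(\mathbf a)>-\infty$ for all $\mathbf a\in W_{\mathcal B}$; (2) for all $\mathbf a\in V'_{\mathrm{mon}}(f)\cap W_{\mathcal B}$ and $i=0,\dots,q-1$, $\mathbf a-i\mathbf e\in V_{\mathrm{mon}}(f)$; (3) for all $\mathbf a,\mathbf b\in V'_{\mathrm{mon}}(f)\cap W_{\mathcal B}$, $\mathbf a-\mathbf b\notin S-\mathbf e$; and (4) $I=(x^{\mathbf a}\mid\mathbf a\in V'_{\mathrm{mon}}(f)\cap W_{\mathcal B})$ and $\operatorname{Exp} I=\{\mathbf a\in W_{\mathcal B}:\operatorname{pval}(\mathbf a)\ge0\}$.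
   Context: Standing notation. Fix $d\ge 1$. Let $\sigma\subseteq\mathbb R^d$ be a full-dimensional, strongly convex rational polyhedral cone, so $\sigma^\vee$ is full-dimensional and strongly convex. $S=\sigma^\vee\cap\mathbb Z^d$, $R=\mathbb C[S]$ with monomial basis $x^{\mathbf a}$, $\mathbf a\in S$. $h_1,\dots,h_n$ are the primitive support functions of the facets of $\sigma^\vee$, so $S=\{\mathbf a\in\mathbb Z^d:h_i(\mathbf a)\ge0\ \forall i\}$. $(g,m)!=\prod_{j=0}^m(g-j)$ for $m\ge0$, $=1$ for $m<0$; $H_{\mathbf d}=\prod_i(h_i,h_i(-\mathbf d)-1)!$. For $f$ divisible by $H_{\mathbf d}$, $\delta=x^{\mathbf d}f(\theta)$ acts by $\delta(x^{\mathbf a})=f(\mathbf a)x^{\mathbf a+\mathbf d}$. $\operatorname{Exp} I=\{\mathbf a\in S:x^{\mathbf a}\in I\}$; $I$ is $\delta$-fixed if $\delta(I)=I$. $V_{\mathrm{mon}}(f)=\{\mathbf a\in\mathbb Z^d:f(\mathbf a)=0\}$; $S-\mathbf e=\{\mathbf s-\mathbf e:\mathbf s\in S\}$. For $\mathbf a\in\mathbb Z^d$, $\operatorname{val}(\mathbf a)=\inf\{t\in\mathbb R:\mathbf a+t\mathbf d\in V_{\mathrm{mon}}(f)\}\in\mathbb R\cup\{\pm\infty\}$ ($\inf\emptyset=+\infty$). When $\operatorname{val}(\mathbf a)$ is finite, $\operatorname{pval}(\mathbf a)=\max\{t\in[\operatorname{val}(\mathbf a),\operatorname{val}(\mathbf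 a)+1):\mathbf a+t\mathbf d\in V_{\mathrm{mon}}(f)\}$ and $\operatorname{vpt}(\mathbf a)=\mathbf a+\operatorname{pval}(\mathbf a)\mathbf d$. $V'_{\mathrm{mon}}(f)=\{\operatorname{vpt}(\mathbf a):\mathbf a\in\mathbb Z^d,\ \operatorname{val}(\mathbf a)\text{ finite}\}$. A tuple $\beta\in\mathbb N^n$ is compatible with $\mathbf d$ if for every $i$, $\beta_i=0$ or $h_i(\mathbf d)=0$; $\mathcal B\subseteq\mathbb N^n$ is compatible with $\mathbf d$ if each element is. $W_\beta=\{\mathbf a\in S: h_i(\mathbf a)\ge\beta_i\ \forall i\}$, $W_{\mathcal B}=\bigcup_{\beta\in\mathcal B}W_\beta$. *)

From HB Require Import structures.
From mathcomp Require Import all_boot all_order all_algebra.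
From mathcomp Require Import mpoly.
Set Implicit Arguments. Unset Strict Implicit. Unset Printing Implicit Defensive.
Import Order.TTheory GRing.Theory Num.Theory.
Local Open Scope ring_scope.

Notation Zv dm := 'rV[int]_dm.

Definition hval (dm : nat) (h : Zv dm) (a : Zv dm) : int :=
  \sum_(j < dm) h 0 j * a 0 j.

Definition hvalQ (dm : nat) (h : Zv dm) (x : 'I_dm -> rat) : rat :=
  \sum_(j < dm) (h 0 j)%:~R * x j.

Definition primitive (dm : nat) (v : Zv dm) : Prop :=
  forall (k : int) (w : Zv dm), v = k *: w -> `|k| = 1.

(* h_1..h_n (n, h) are the primitive support functions of the facets of a
   full-dimensional, strongly convex rational polyhedral cone
   sigma^vee = {x | h_i(x) >= 0 for all i} in R^dm (tested on rational points,
   which suffices since all data are rational). *)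
Definition facet_data (dm n : nat) (h : 'I_n -> Zv dm) : Prop :=
  [/\
      forall i, primitive (h i),
      exists x : 'I_dm -> rat, forall i, 0 < hvalQ (h i) x,
      forall x : 'I_dm -> rat,
        (forall i, 0 <= hvalQ (h i) x) ->
        (forall i, 0 <= hvalQ (h i) (fun j => - x j)) -> x = (fun _ => 0)
    & (* each {h_i = 0} cuts out a facet (codim 1 face), and the h_i are distinct:
         some point of the cone lies on {h_i = 0} and strictly inside all other
         half-spaces *)
      forall i, exists x : 'I_dm -> rat,
        hvalQ (h i) x = 0 /\ forall j, j != i -> 0 < hvalQ (h j) x ].

Definition inS (dm n : nat) (h : 'I_n -> Zv dm) (a : Zv dm) : Prop :=
  forall i, 0 <= hval (h i) a.

(* An element of R is a finitely supported function S -> C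
   (sum_a g(a) x^a), seen as a function Zv dm -> C vanishing off S. *)
Definition inR (C : numClosedFieldType) (dm n : nat) (h : 'I_n -> Zv dm)
    (g : Zv dm -> C) : Prop :=
  exists s : seq (Zv dm), forall a, g a != 0 -> (a \in s) /\ inS h a.

Definition mono (C : numClosedFieldType) (dm : nat) (a : Zv dm) : Zv dm -> C :=
  fun b => (b == a)%:R.

(* product r * g in R, computed from a list s covering the support of r *)
Definition mulR (C : numClosedFieldType) (dm : nat) (s : seq (Zv dm))
    (r g : Zv dm -> C) : Zv dm -> C :=
  fun c => \sum_(a <- undup s) r a * g (c - a).

Definition ideal (C : numClosedFieldType) (dm n : nat) (h : 'I_n -> Zv dm)
    (I : (Zv dm -> C) -> Prop) : Prop :=
  [/\ forall g, I g -> inR h g,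
      I (fun _ => 0),
      forall g k, I g -> I k -> I (fun b => g b + k b)
    & forall r g (s : seq (Zv dm)), inR h r -> (forall a, r a != 0 -> a \in s) ->
        I g -> I (mulR s r g) ].

Definition genIdeal (C : numClosedFieldType) (dm n : nat) (h : 'I_n -> Zv dm)
    (G : Zv dm -> Prop) (g : Zv dm -> C) : Prop :=
  forall J, ideal h J -> (forall a, G a -> J (mono C a)) -> J g.

Definition ExpI (C : numClosedFieldType) (dm n : nat) (h : 'I_n -> Zv dm)
    (I : (Zv dm -> C) -> Prop) (a : Zv dm) : Prop :=
  inS h a /\ I (mono C a).

Definition monomial_ideal (C : numClosedFieldType) (dm n : nat) (h : 'I_n -> Zv dm)
    (I : (Zv dm -> C) -> Prop) : Prop :=
  ideal h I /\ forall g, I g <-> genIdeal h (ExpI h I) g.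

Definition vecC (C : numClosedFieldType) (dm : nat) (a : Zv dm) : 'I_dm -> C :=
  fun j => (a 0 j)%:~R.

Definition evalZ (C : numClosedFieldType) (dm : nat) (f : {mpoly C[dm]})
    (a : Zv dm) : C := f.@[vecC C a].

Definition hpoly (C : numClosedFieldType) (dm : nat) (h : Zv dm) : {mpoly C[dm]} :=
  \sum_(j < dm) (h 0 j)%:~R *: 'X_j.

Definition ffactm (C : numClosedFieldType) (dm : nat) (g : {mpoly C[dm]}) (m : int)
    : {mpoly C[dm]} :=
  if m < 0 then 1 else \prod_(j < (absz m).+1) (g - j%:R).

Definition Hd (C : numClosedFieldType) (dm n : nat) (h : 'I_n -> Zv dm) (d : Zv dm)
    : {mpoly C[dm]} :=
  \prod_(i < n) ffactm (hpoly C (h i)) (hval (h i) (- d) - 1).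

(* delta(sum_a g(a) x^a) = sum_a f(a) g(a) x^(a+d) *)
Definition delta (C : numClosedFieldType) (dm : nat) (f : {mpoly C[dm]}) (d : Zv dm)
    (g : Zv dm -> C) : Zv dm -> C :=
  fun b => evalZ f (b - d) * g (b - d).

Definition delta_fixed (C : numClosedFieldType) (dm : nat) (f : {mpoly C[dm]})
    (d : Zv dm) (I : (Zv dm -> C) -> Prop) : Prop :=
  forall k, I k <-> exists g, I g /\ k = delta f d g.

Definition Vmon (C : numClosedFieldType) (dm : nat) (f : {mpoly C[dm]}) (a : Zv dm)
    : Prop := evalZ f a = 0.

(* b = a + t d  (t rational; any real t with a + t d in Z^dm is rational as d <> 0) *)
Definition online (dm : nat) (d a : Zv dm) (t : rat) (b : Zv dm) : Prop :=
  forall j, ((b 0 j)%:~R : rat) = (a 0 j)%:~R + t * (d 0 j)%:~R.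

Definition Tset (C : numClosedFieldType) (dm : nat) (f : {mpoly C[dm]}) (d a : Zv dm)
    (t : rat) : Prop :=
  exists b, online d a t b /\ Vmon f b.

Definition val_minfty (C : numClosedFieldType) (dm : nat) (f : {mpoly C[dm]})
    (d a : Zv dm) : Prop :=
  forall m : rat, exists t, Tset f d a t /\ t < m.

Definition val_is (C : numClosedFieldType) (dm : nat) (f : {mpoly C[dm]})
    (d a : Zv dm) (v : rat) : Prop :=
  (forall t, Tset f d a t -> v <= t) /\
  (forall w, (forall t, Tset f d a t -> w <= t) -> w <= v).

Definition pval_is (C : numClosedFieldType) (dm : nat) (f : {mpoly C[dm]})
    (d a : Zv dm) (p : rat) : Prop :=
  exists v, [/\ val_is f d a v, Tset f d a p, v <= p < v + 1 &
    forall t, Tset f d a t -> v <= t < v + 1 -> t <= p].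

Definition Vprime (C : numClosedFieldType) (dm : nat) (f : {mpoly C[dm]})
    (d b : Zv dm) : Prop :=
  exists a p, pval_is f d a p /\ online d a p b.

Definition Wbeta (dm n : nat) (h : 'I_n -> Zv dm) (beta : 'I_n -> nat) (a : Zv dm)
    : Prop :=
  inS h a /\ forall i, (beta i)%:Z <= hval (h i) a.

Definition WB (dm n : nat) (h : 'I_n -> Zv dm) (B : ('I_n -> nat) -> Prop) (a : Zv dm)
    : Prop :=
  exists beta, B beta /\ Wbeta h beta a.

Definition compatible (dm n : nat) (h : 'I_n -> Zv dm) (d : Zv dm)
    (B : ('I_n -> nat) -> Prop) : Prop :=
  forall beta, B beta -> forall i, beta i = 0%N \/ hval (h i) d = 0.

From HB Require Import structures.
From mathcomp Require Import all_boot all_order all_algebra.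
From mathcomp Require Import mpoly.
From mathcomp Require Import ring zify.
From Stdlib Require Import Classical FunctionalExtensionality.
Import Order.TTheory GRing.Theory Num.Theory.
Set Implicit Arguments. Unset Strict Implicit.
Local Open Scope ring_scope.

(* Write E = Exp I. Since I is an ideal, E + S = E; since delta(I) = I, every
   b in E has f(b - d) <> 0, and a in E with f(a) <> 0 gives a + d in E. As
   -e lies in S and some facet form is negative on e, the intersection of E
   with a line a + Z e is a half-line {a + j e : j <= J}. The two facts about f
   then say: f vanishes at a + j e for J - q < j <= J and nowhere below, so
   along that line val = (J - q + 1)/q and pval = J/q, i.e. vpt is the top
   point a + J e of the half-line. All four claims follow once B is chosen so
   that W_B is the union of the lines meeting E: take the tuples recording
   h_i(c), c in E, in the coordinates where h_i(d) = 0. *)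

Lemma primitive_neq0 (dm : nat) (e : Zv dm) : primitive e -> e != 0.
Proof.
by move=> e_prim; apply/eqP=> e0; have := e_prim 2 0; rewrite scaler0 e0 => /(_ erefl).
Qed.

Lemma primitive_rat_multiple (dm : nat) (e x : Zv dm) (s : rat) :
  primitive e -> (forall j, ((x 0 j)%:~R : rat) = s * (e 0 j)%:~R) ->
  exists z : int, s = z%:~R.
Proof.
move=> e_prim Hx; have numE : ((numq s)%:~R : rat) = s * (denq s)%:~R by rewrite numqE.
have cop : coprimez (denq s) (numq s).
  by rewrite /coprimez /gcdz gcdnC (eqP (coprime_num_den s)).
have den_dvd j : (denq s %| e ord0 j)%Z.
  rewrite -(Gauss_dvdzr _ cop); apply/dvdzP; exists (x ord0 j).
  apply/eqP; rewrite -(eqr_int rat) !rmorphM /= Hx numE; apply/eqP; ring.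
have : `|denq s| = 1.
  apply: (e_prim _ (\row_j ((e ord0 j) %/ denq s)%Z)).
  by apply/rowP=> j; rewrite !mxE mulrC divzK.
by rewrite gtr0_norm ?denq_gt0 // => den1; exists (numq s); rewrite numE den1 mulr1.
Qed.

Lemma int_boundary (P : int -> Prop) (j0 m : int) :
  P j0 -> (forall j, P j -> j <= m) -> exists J, P J /\ ~ P (J + 1).
Proof.
move=> Pj0 Pm; apply: NNPP => no_boundary.
have Pall (k : nat) : P (j0 + k%:Z).
  elim: k => [|k IHk]; first by rewrite addr0.
  apply: NNPP => Pk1; apply: no_boundary; exists (j0 + k%:Z).
  by split; last by rewrite -addn1 PoszD addrA in Pk1.
have := Pm _ (Pall `|m - j0|.+1); have := ler_norm (m - j0); rewrite -abszE; lia.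
Qed.

Lemma hvalD (dm : nat) (h a b : Zv dm) : hval h (a + b) = hval h a + hval h b.
Proof. by rewrite /hval -big_split; apply: eq_bigr => j _; rewrite mxE mulrDr. Qed.

Lemma hvalZ (dm : nat) (h a : Zv dm) (k : int) : hval h (k *: a) = k * hval h a.
Proof. by rewrite /hval mulr_sumr; apply: eq_bigr => j _; rewrite mxE; ring. Qed.

Lemma hvalN (dm : nat) (h a : Zv dm) : hval h (- a) = - hval h a.
Proof. by rewrite -scaleN1r hvalZ mulN1r. Qed.

Lemma hvalQ_int (dm : nat) (h a : Zv dm) :
  hvalQ h (fun j => (a 0 j)%:~R) = (hval h a)%:~R.
Proof. by rewrite /hvalQ /hval rmorph_sum; apply: eq_bigr => j _; rewrite rmorphM. Qed.

Lemma val_uniq (C : numClosedFieldType) (dm : nat) (f : {mpoly C[dm]}) (d a : Zv dm) v w :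
  val_is f d a v -> val_is f d a w -> v = w.
Proof. by move=> [lbv glbv] [lbw glbw]; apply/eqP; rewrite eq_le glbv // glbw. Qed.

Section Cone.
Variables (dm n : nat) (h : 'I_n -> Zv dm).

Lemma inSD a b : inS h a -> inS h b -> inS h (a + b).
Proof. by move=> Sa Sb i; rewrite hvalD addr_ge0. Qed.

Lemma inSZ a (k : int) : 0 <= k -> inS h a -> inS h (k *: a).
Proof. by move=> k0 Sa i; rewrite hvalZ mulr_ge0. Qed.

Lemma inS_of_pscale a (k : nat) : (0 < k)%N -> inS h (k%:Z *: a) -> inS h a.
Proof. by move=> k0 Ska i; have := Ska i; rewrite hvalZ; nia. Qed.

Lemma inS_line_eq0 a :
  (forall x : 'I_dm -> rat, (forall i, 0 <= hvalQ (h i) x) ->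
     (forall i, 0 <= hvalQ (h i) (fun j => - x j)) -> x = (fun _ => 0)) ->
  inS h a -> inS h (- a) -> a = 0.
Proof.
move=> convex Sa Sma.
have a0 : (fun j => ((a 0 j)%:~R : rat)) = (fun _ => 0).
  apply: convex => i; first by rewrite hvalQ_int ler0z.
  have -> : (fun j => - ((a 0 j)%:~R : rat)) = (fun j => ((- a) 0 j)%:~R).
    by apply: functional_extensionality => j; rewrite mxE rmorphN.
  by rewrite hvalQ_int ler0z.
by apply/rowP=> j; have /eqP := congr1 (fun x => x j) a0; rewrite intr_eq0 mxE => /eqP.
Qed.

Lemma exists_facet_neg e :
  (forall x : 'I_dm -> rat, (forall i, 0 <= hvalQ (h i) x) ->
     (forall i, 0 <= hvalQ (h i) (fun j => - x j)) -> x = (fun _ => 0)) ->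
  inS h (- e) -> e != 0 -> exists i, hval (h i) e < 0.
Proof.
move=> convex Sme /eqP e0; apply: NNPP => no_neg; apply/e0/(inS_line_eq0 convex) => // i.
by rewrite leNgt; apply/negP => ?; apply: no_neg; exists i.
Qed.

Lemma line_bounded i a (e : Zv dm) (j : int) :
  hval (h i) e < 0 -> 0 <= hval (h i) (a + j *: e) -> j <= `|hval (h i) a|%N.
Proof. rewrite hvalD hvalZ abszE => ? ?; have := ler_norm (hval (h i) a); nia. Qed.

End Cone.

Definition delta_stable_exponents (C : numClosedFieldType) (dm n : nat)
    (h : 'I_n -> Zv dm) (f : {mpoly C[dm]}) (d : Zv dm) (E : Zv dm -> Prop) : Prop :=
  [/\ forall c, E c -> inS h c,
      forall c s, E c -> inS h s -> E (c + s),
      forall b, E b -> evalZ f (b - d) != 0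
    & forall a, E a -> evalZ f a != 0 -> E (a + d)].

Section Monomials.
Variables (C : numClosedFieldType) (dm n : nat) (h : 'I_n -> Zv dm).

Lemma mulR_mono (s c : Zv dm) : mulR [:: s] (mono C s) (mono C c) = mono C (c + s).
Proof.
apply: functional_extensionality => b.
by rewrite /mulR /= big_cons big_nil /mono eqxx mul1r addr0 subr_eq.
Qed.

Lemma inR_mono (s : Zv dm) : inS h s -> inR h (mono C s).
Proof.
move=> Ss; exists [:: s] => a; rewrite /mono.
by case: (eqVneq a s) => [->|]; rewrite ?mem_seq1 ?eqxx.
Qed.

Lemma mono_supp (s a : Zv dm) : mono C s a != 0 -> a \in [:: s].
Proof. by rewrite /mono mem_seq1; case: (a == s); rewrite ?eqxx. Qed.

Lemma ideal_mono_mul (I : (Zv dm -> C) -> Prop) (s c : Zv dm) :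
  ideal h I -> inS h s -> I (mono C c) -> I (mono C (c + s)).
Proof.
move=> [_ _ _ Imul] Ss Ic; rewrite -mulR_mono.
by apply: Imul => //; [exact: inR_mono | exact: mono_supp].
Qed.

Lemma ExpI_addS (I : (Zv dm -> C) -> Prop) (c s : Zv dm) :
  ideal h I -> ExpI h I c -> inS h s -> ExpI h I (c + s).
Proof. by move=> Iid [Sc Ic] Ss; split; [exact: inSD | exact: ideal_mono_mul]. Qed.

Lemma ExpI_delta_preimage (I : (Zv dm -> C) -> Prop) (f : {mpoly C[dm]}) (d b : Zv dm) :
  delta_fixed f d I -> ExpI h I b -> evalZ f (b - d) != 0.
Proof.
move=> fixI [_ Ib]; have [g [_ /(congr1 (fun k => k b))]] := (fixI _).1 Ib.
rewrite /mono /delta eqxx /=; apply: contra_eqN => /eqP->.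
by rewrite mul0r oner_eq0.
Qed.

(* x^(a+d) = f(a)^-1 delta(x^a) *)
Lemma ExpI_add_d (I : (Zv dm -> C) -> Prop) (f : {mpoly C[dm]}) (d a : Zv dm) :
  ideal h I -> delta_fixed f d I -> ExpI h I a -> evalZ f a != 0 -> ExpI h I (a + d).
Proof.
move=> [Iin _ _ Imul] fixI [_ Ia] fa0.
have Id : I (delta f d (mono C a)) by apply/(fixI _); exists (mono C a).
pose r (x : Zv dm) : C := (evalZ f a)^-1 * mono C 0 x.
have r_supp (x : Zv dm) : r x != 0 -> x \in [:: 0].
  by rewrite /r mulf_eq0 negb_or => /andP [_ /mono_supp].
have Rr : inR h r.
  exists [:: 0] => x rx0; split; first exact: r_supp.
  move/r_supp: rx0; rewrite mem_seq1 => /eqP-> i.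
  by rewrite /hval big1 // => j _; rewrite mxE mulr0.
have Iad : I (mono C (a + d)).
  have -> : mono C (a + d) = mulR [:: 0] r (delta f d (mono C a)); last exact: Imul.
  apply: functional_extensionality => b.
  rewrite /mulR /= big_cons big_nil addr0 /r /mono /delta eqxx mulr1 subr0 -subr_eq.
  by case: (eqVneq (b - d) a) => [->|]; rewrite ?mulr1 ?mulVf ?mulr0.
split=> //.
by have [s /(_ (a + d))] := Iin _ Iad; rewrite /mono eqxx oner_eq0 => /(_ isT) [].
Qed.

Lemma ExpI_delta_stable (I : (Zv dm -> C) -> Prop) (f : {mpoly C[dm]}) (d : Zv dm) :
  ideal h I -> delta_fixed f d I -> delta_stable_exponents h f d (ExpI h I).
Proof.
move=> Iid fixI; split=> [c [] | c s | b | a] //; first exact: ExpI_addS.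
  exact: ExpI_delta_preimage.
exact: ExpI_add_d.
Qed.

Lemma monomial_ideal_generated (I : (Zv dm -> C) -> Prop) (G : Zv dm -> Prop) :
  monomial_ideal h I -> (forall a, G a -> ExpI h I a) ->
  (forall c, ExpI h I c -> exists2 g, G g & inS h (c - g)) ->
  forall k, I k <-> genIdeal h G k.
Proof.
move=> [Iid Igen] GE EG k; split=> [/Igen Ik J Jid JG | Gk].
  apply: Ik => // c /EG [g Gg Scg]; have := ideal_mono_mul Jid Scg (JG _ Gg).
  by rewrite addrC subrK.
by apply: Gk => // a /GE [].
Qed.

End Monomials.

Section ExponentSet.
Variables (C : numClosedFieldType) (dm n : nat) (h : 'I_n -> Zv dm).
Variables (f : {mpoly C[dm]}) (d e : Zv dm) (q : nat).
Hypotheses (q_gt0 : (0 < q)%N) (e_prim : primitive e) (d_def : d = q%:Z *: e).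

Lemma ler_divq (x y : int) : (x%:~R / q%:R <= y%:~R / q%:R :> rat) = (x <= y).
Proof. by rewrite ler_pM2r ?ler_int // invr_gt0 ltr0n. Qed.

Lemma ltr_divq (x y : int) : (x%:~R / q%:R < y%:~R / q%:R :> rat) = (x < y).
Proof. by rewrite ltr_pM2r ?ltr_int // invr_gt0 ltr0n. Qed.

(* e is primitive, so a + t d is a lattice point only for t in (1/q) Z *)
Lemma onlineP a t b : online d a t b <-> exists j : int, t = j%:~R / q%:R /\ b = a + j *: e.
Proof.
have q0 : (q%:R : rat) != 0 by rewrite pnatr_eq0 -lt0n.
split=> [on_abt | [j [-> ->]] l]; last by rewrite d_def !mxE !rmorphD !rmorphM /=; field.
have [z tqz] : exists z : int, t * q%:R = z%:~R.
  apply: (@primitive_rat_multiple dm e (b - a)) => // l.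
  by rewrite !mxE rmorphB /= on_abt d_def mxE rmorphM /=; ring.
exists z; split; first by rewrite -tqz mulfK.
apply/rowP => l; apply/eqP; rewrite -(eqr_int rat) !mxE rmorphD rmorphM /= on_abt -tqz.
by rewrite d_def mxE rmorphM /=; apply/eqP; ring.
Qed.

Lemma TsetP a t : Tset f d a t <-> exists j : int, t = j%:~R / q%:R /\ Vmon f (a + j *: e).
Proof.
split=> [[b [/onlineP [j [-> ->]] fb]] | [j [-> fj]]]; first by exists j.
by exists (a + j *: e); split=> //; apply/onlineP; exists j.
Qed.

Hypothesis inS_opp_d : inS h (- d).

Lemma inS_opp_e : inS h (- e).
Proof. by apply: (inS_of_pscale q_gt0); rewrite scalerN -d_def. Qed.

Lemma hval_d_le0 i : hval (h i) d <= 0.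
Proof. by have := inS_opp_d i; rewrite hvalN oppr_ge0. Qed.

Variable E : Zv dm -> Prop.
Hypothesis E_stable : delta_stable_exponents h f d E.

Lemma E_inS c : E c -> inS h c.
Proof. by case: E_stable => + _ _ _; apply. Qed.

Lemma E_addS c s : E c -> inS h s -> E (c + s).
Proof. by case: E_stable => _ + _ _; apply. Qed.

Lemma E_preimage b : E b -> evalZ f (b - d) != 0.
Proof. by case: E_stable => _ _ + _; apply. Qed.

Lemma E_add_d a : E a -> evalZ f a != 0 -> E (a + d).
Proof. by case: E_stable => _ _ _; apply. Qed.

Lemma E_line_le a (j k : int) : E (a + j *: e) -> k <= j -> E (a + k *: e).
Proof.
move=> Ej kj; have -> : a + k *: e = (a + j *: e) + (j - k) *: (- e).
  by apply/rowP => i; rewrite !mxE; ring.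
by apply: E_addS Ej _; apply: inSZ inS_opp_e; rewrite subr_ge0.
Qed.

Section Top.
Variables (a : Zv dm) (J : int).
Hypotheses (EJ : E (a + J *: e)) (notEJ1 : ~ E (a + (J + 1) *: e)).

Lemma Vmon_below_top (j : int) : J - q%:Z < j <= J -> Vmon f (a + j *: e).
Proof.
move=> /andP [Jj jJ]; apply: NNPP => /eqP fj0; apply: notEJ1.
have := E_add_d (E_line_le EJ jJ) fj0.
have -> : a + j *: e + d = a + (j + q%:Z) *: e.
  by rewrite d_def; apply/rowP => l; rewrite !mxE; ring.
by move/E_line_le; apply; lia.
Qed.

Lemma not_Vmon_far_below (j : int) : j + q%:Z <= J -> ~ Vmon f (a + j *: e).
Proof.
move=> jJ; have := E_preimage (E_line_le EJ jJ).
have -> : a + (j + q%:Z) *: e - d = a + j *: e.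
  by rewrite d_def; apply/rowP => l; rewrite !mxE; ring.
by move=> /eqP.
Qed.

Lemma val_is_top : val_is f d a ((J - q%:Z + 1)%:~R / q%:R).
Proof.
split=> [t /TsetP [j [-> fj]] | w lbw]; last first.
  by apply: lbw; apply/TsetP; exists (J - q%:Z + 1); split=> //; apply: Vmon_below_top; lia.
rewrite ler_divq leNgt; apply/negP => jJ; apply: (not_Vmon_far_below (j := j)) => //; lia.
Qed.

Lemma pval_is_top p : pval_is f d a p <-> p = J%:~R / q%:R.
Proof.
set v : rat := (J - q%:Z + 1)%:~R / q%:R.
have v1E : v + 1 = (J + 1)%:~R / q%:R.
  by rewrite /v !rmorphD rmorphN /= rmorph1; field; rewrite pnatr_eq0 -lt0n.
have TJ : Tset f d a (J%:~R / q%:R).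
  by apply/TsetP; exists J; split=> //; apply: Vmon_below_top; lia.
have vJ : v <= J%:~R / q%:R < v + 1 by rewrite v1E /v ler_divq ltr_divq; apply/andP; split; lia.
have window t : Tset f d a t -> v <= t < v + 1 -> t <= J%:~R / q%:R.
  by move=> /TsetP [j [-> _]]; rewrite v1E /v !ler_divq ltr_divq => /andP [_ ?]; lia.
split=> [[w [val_w Tp window_p maxp]] | ->]; last by exists v; split=> //; exact: val_is_top.
move: window_p maxp; rewrite (val_uniq val_w val_is_top) => window_p maxp.
by apply/eqP; rewrite eq_le window // maxp.
Qed.

End Top.

Hypothesis facet_neg_e : exists i, hval (h i) e < 0.

Lemma E_line_top a (j0 : int) :
  E (a + j0 *: e) -> exists J, E (a + J *: e) /\ ~ E (a + (J + 1) *: e).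
Proof.
have [i he] := facet_neg_e => Ej0.
apply: (int_boundary (P := fun j => E (a + j *: e)) (m := `|hval (h i) a|%N) Ej0).
by move=> j /E_inS /(_ i); apply: line_bounded.
Qed.

Lemma E_top_ge0 a (J : int) : E a -> ~ E (a + (J + 1) *: e) -> 0 <= J.
Proof.
move=> Ea notEJ1; rewrite leNgt; apply/negP => J0; apply: notEJ1.
by apply: (@E_line_le a 0); rewrite ?scale0r ?addr0 //; lia.
Qed.

Definition beta_of (c : Zv dm) (i : 'I_n) : nat :=
  if hval (h i) d == 0 then `|hval (h i) c|%N else 0%N.

Definition Bset (beta : 'I_n -> nat) : Prop := exists2 c, E c & beta = beta_of c.

Lemma Bset_compatible : compatible h d Bset.
Proof. by move=> _ [c _ ->] i; rewrite /beta_of; case: eqP; [right | left]. Qed.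

Lemma WB_of_E a : E a -> WB h Bset a.
Proof.
move=> Ea; exists (beta_of a); split; first by exists a.
split=> [|i]; first exact: E_inS.
by have := E_inS Ea i; rewrite /beta_of; case: eqP => // _ Sai; rewrite abszE ger0_norm.
Qed.

(* If k bounds every |h_i(c)|, then a - k d = c + (a - c - k d) with a - c - k d in S. *)
Lemma WB_meets_E a : WB h Bset a -> exists j : int, E (a + j *: e).
Proof.
move=> [_ [[c Ec ->] [Sa beta_le]]].
pose k := (\max_i `|hval (h i) c|)%N.
exists (- (k%:Z * q%:Z)).
have -> : a + (- (k%:Z * q%:Z)) *: e = c + (a - c - k%:Z *: d).
  by rewrite d_def; apply/rowP => l; rewrite !mxE; ring.
apply: E_addS => // i; rewrite !hvalD !hvalN hvalZ.
have ck := @leq_bigmax _ (fun i => `|hval (h i) c|%N) i.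
have := beta_le i; have := Sa i; have := hval_d_le0 i; rewrite /beta_of.
have := ler_norm (hval (h i) c); rewrite -abszE -/k.
case: eqP => [-> | /eqP hd0]; first by lia.
nia.
Qed.

Lemma WB_line_top a : WB h Bset a -> exists J, E (a + J *: e) /\ ~ E (a + (J + 1) *: e).
Proof. by move=> /WB_meets_E [j /E_line_top]. Qed.

(* vpt picks the top point of the half-line E meets *)
Lemma Vprime_WB_top a : Vprime f d a -> WB h Bset a -> E a /\ ~ E (a + e).
Proof.
move=> [a0 [p [pval_p /onlineP [m [pm ->]]]]] /WB_meets_E [j].
rewrite -addrA -scalerDl => /E_line_top [J [EJ notEJ1]].
have /eqP := (pval_is_top EJ notEJ1 p).1 pval_p.
rewrite pm eq_le !ler_divq -eq_le => /eqP ->; split=> //.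
by rewrite -addrA -[X in _ + (_ + X)]scale1r -scalerDl.
Qed.

Lemma WB_val_finite a : WB h Bset a -> ~ val_minfty f d a.
Proof.
move=> /WB_line_top [J [EJ notEJ1]] /(_ ((J - q%:Z + 1)%:~R / q%:R)) [t [Tt]].
by have [lbt _] := val_is_top EJ notEJ1; rewrite ltNge lbt.
Qed.

Lemma Vprime_WB_Vmon a :
  Vprime f d a -> WB h Bset a -> forall i : nat, (i < q)%N -> Vmon f (a - i%:Z *: e).
Proof.
move=> Va Wa i iq; have [Ea notEa1] := Vprime_WB_top Va Wa.
have Ea0 : E (a + 0 *: e) by rewrite scale0r addr0.
have notE1 : ~ E (a + (0 + 1) *: e) by rewrite add0r scale1r.
by rewrite -scaleNr; apply: (Vmon_below_top Ea0 notE1); lia.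
Qed.

Lemma Vprime_WB_separated a b : Vprime f d a -> WB h Bset a ->
  Vprime f d b -> WB h Bset b -> ~ inS h (a - b + e).
Proof.
move=> Va Wa Vb Wb Sabe; have [_ notEa1] := Vprime_WB_top Va Wa.
have [Eb _] := Vprime_WB_top Vb Wb; apply: notEa1.
by have := E_addS Eb Sabe; rewrite addrA [b + _]addrC subrK.
Qed.

Lemma E_iff_WB_pval_ge0 a : E a <-> WB h Bset a /\ exists p, pval_is f d a p /\ 0 <= p.
Proof.
split=> [Ea | [Wa [p [pval_p p0]]]].
  split; first exact: WB_of_E.
  have Ea0 : E (a + 0 *: e) by rewrite scale0r addr0.
  have [J [EJ notEJ1]] := E_line_top Ea0.
  exists (J%:~R / q%:R); split; first exact/(pval_is_top EJ notEJ1).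
  by rewrite divr_ge0 ?ler0z ?ler0n // (E_top_ge0 Ea notEJ1).
have [J [EJ notEJ1]] := WB_line_top Wa.
have J0 : 0 <= J.
  by move: p0; rewrite (pval_is_top EJ notEJ1 p).1 // -(ler_divq 0) rmorph0 mul0r.
by have := E_line_le EJ J0; rewrite scale0r addr0.
Qed.

Lemma E_above_Vprime c : E c -> exists2 g, Vprime f d g /\ WB h Bset g & inS h (c - g).
Proof.
move=> Ec; have Ec0 : E (c + 0 *: e) by rewrite scale0r addr0.
have [J [EJ notEJ1]] := E_line_top Ec0.
exists (c + J *: e); last first.
  rewrite opprD addrA subrr add0r -scalerN; apply: inSZ inS_opp_e.
  exact: E_top_ge0 Ec notEJ1.
split; last exact: WB_of_E.
exists c, (J%:~R / q%:R); split; first exact/(pval_is_top EJ notEJ1).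
by apply/onlineP; exists J.
Qed.

End ExponentSet.

Theorem mainTheorem8 (C : numClosedFieldType) (dm n : nat) (h : 'I_n -> 'rV[int]_dm)
  (d e : 'rV[int]_dm) (q : nat) (f : {mpoly C[dm]}) (I : ('rV[int]_dm -> C) -> Prop) :
  (0 < dm)%N ->
  facet_data h ->
  (exists g : {mpoly C[dm]}, f = g * Hd C h d) ->
  d != 0 ->
  inS h (- d) ->
  (0 < q)%N -> primitive e -> d = (q%:Z) *: e ->
  monomial_ideal h I ->
  (exists g, I g /\ g <> (fun _ => 0)) ->
  delta_fixed f d I ->
  exists B : ('I_n -> nat) -> Prop,
    [/\ compatible h d B,
        forall a, WB h B a -> ~ val_minfty f d a,
        forall a, Vprime f d a -> WB h B a ->
                    forall i : nat, (i < q)%N -> Vmon f (a - (i%:Z) *: e),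
        forall a b, Vprime f d a -> WB h B a -> Vprime f d b -> WB h B b ->
                    ~ inS h (a - b + e)
      & (forall g, I g <-> genIdeal h (fun a => Vprime f d a /\ WB h B a) g) /\
        (forall a, ExpI h I a <-> WB h B a /\ exists p, pval_is f d a p /\ 0 <= p) ].
Proof.
move=> _ [_ _ convex _] _ _ inS_opp_d q_gt0 e_prim d_def monI _ fixI.
have E_stable := ExpI_delta_stable monI.1 fixI.
have facet_neg_e : exists i, hval (h i) e < 0.
  exact: exists_facet_neg convex (inS_opp_e q_gt0 d_def inS_opp_d) (primitive_neq0 e_prim).
exists (Bset h d (ExpI h I)); split.
- exact: Bset_compatible.
- by move=> a /(WB_val_finite q_gt0 e_prim d_def inS_opp_d E_stable facet_neg_e).
- move=> a Va Wa; exact: (Vprime_WB_Vmon q_gt0 e_prim d_def inS_opp_d E_stable facet_neg_e Va Wa).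
- move=> a b; exact: (Vprime_WB_separated q_gt0 e_prim d_def inS_opp_d E_stable facet_neg_e).
split=> [g | a]; last exact: (E_iff_WB_pval_ge0 q_gt0 e_prim d_def inS_opp_d E_stable facet_neg_e).
apply: monomial_ideal_generated => // [a [Va Wa] | c].
  exact: (Vprime_WB_top q_gt0 e_prim d_def inS_opp_d E_stable facet_neg_e Va Wa).1.
exact: (E_above_Vprime q_gt0 e_prim d_def inS_opp_d E_stable facet_neg_e).
Qed.
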